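(* Let $\mathbf{a}=(a_n)_{n\geq 1}$ be a strong divisibility sequence. Then for every positive integer $n$, \[\mathrm{lcm}(a_1,a_2,\dots,a_n)=\gcd\left\{\binom{n}{k}_{\mathbf{a}}\,\mathrm{lcm}(a_1,\dots,a_k)\;:\; k\in\mathbb{N},\ n/2\leq k\leq n\right\}.\]
   Context: A strong divisibility sequence is a sequence of positive integers $(a_n)_{n\geq1}$ such that $\gcd(a_n,a_m)=a_{\gcd(n,m)}$ for all positive integers $n,m$. For integers $0\leq k\leq n$, the $\mathbf{a}$-binomial coefficient is $\binom{n}{k}_{\mathbf{a}}:=\frac{a_na_{n-1}\cdots a_{n-k+1}}{a_1a_2\cdots a_k}$ (empty products equal $1$); for a strong divisibility sequence these are positive integers. *)

From mathcomp Require Import all_boot.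
Set Implicit Arguments. Unset Strict Implicit. Unset Printing Implicit Defensive.

(* A sequence (a_n)_{n>=1} is represented by a : nat -> nat; the value a 0
   is irrelevant and never used. *)
Definition strong_div_seq (a : nat -> nat) : Prop :=
  (forall n, 0 < n -> 0 < a n) /\
  (forall n m, 0 < n -> 0 < m -> gcdn (a n) (a m) = a (gcdn n m)).

(* a-binomial coefficient: (a_n a_{n-1} ... a_{n-k+1}) / (a_1 ... a_k),
   defined for 0 <= k <= n (exact division for strong divisibility seqs). *)
Definition abinom (a : nat -> nat) (n k : nat) : nat :=
  (\prod_((n - k).+1 <= i < n.+1) a i) %/ (\prod_(1 <= i < k.+1) a i).

Definition lcm_upto (a : nat -> nat) (k : nat) : nat :=
  \big[lcmn/1]_(1 <= i < k.+1) a i.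

(* Write N(k, n) = a_{n-k+1} ... a_n, D(k) = a_1 ... a_k and L(k) = lcm(a_1, ..., a_k).
   Everything is reduced to counting indices.  For a fixed modulus q, the
   indices j >= 1 with q | a_j are closed under gcd and under taking multiples,
   so they are exactly the multiples of some r; and the window n-k+1, ..., n
   contains at least floor(k/r) multiples of r, as many as 1, ..., k.  Hence
   among a_1, ..., a_k at most as many terms are divisible by q as among the
   window.  A prime-power counting criterion (the p-adic valuation of a product
   is the number of pairs (factor, e) with p^e dividing the factor) turns this
   into D(k) | N(k, n), i.e. the a-binomial coefficient is an integer, and, for
   n/2 <= k < i <= n, into a_i D(k) | L(k) N(k, n).  So L(n) divides every
   term abinom(n, k) L(k) of the gcd, and the term k = n equals L(n). *)

From mathcomp Require Import all_boot zify.
Set Implicit Arguments. Unset Strict Implicit. Unset Printing Implicit Defensive.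

Lemma logn_count_dvd_le p x B : prime p -> 0 < x -> x <= B ->
  logn p x = \sum_(1 <= e < B) (p ^ e %| x).
Proof.
move=> p_pr x_gt0 xB; rewrite logn_count_dvd // [RHS](big_cat_nat _ (n := x)) //=.
rewrite [X in _ + X]big1_seq ?addn0 // => e /andP[_]; rewrite mem_index_iota => /andP[xe _].
by rewrite gtnNdvd // (leq_ltn_trans xe) // ltn_expl ?prime_gt1.
Qed.

Lemma logn_prod_count p B xs : prime p -> (forall x, x \in xs -> 0 < x <= B) ->
  logn p (\prod_(x <- xs) x) = \sum_(1 <= e < B) count (dvdn (p ^ e)) xs.
Proof.
move=> p_pr; elim: xs => [|x xs IH] xs_bnd; first by rewrite big_nil logn1 big1.
have /andP[x_gt0 xB] := xs_bnd x (mem_head x xs).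
have xs_bnd' y : y \in xs -> 0 < y <= B by move=> ys; apply: xs_bnd; rewrite inE ys orbT.
have xs_gt0 : 0 < \prod_(y <- xs) y.
  by rewrite big_seq prodn_cond_gt0 // => y /xs_bnd' /andP[].
by rewrite big_cons lognM // IH // (logn_count_dvd_le p_pr x_gt0 xB) -big_split.
Qed.

Lemma dvdn_prod_count xs ys : (forall x, x \in xs ++ ys -> 0 < x) ->
  (forall p e, prime p -> 0 < e -> count (dvdn (p ^ e)) xs <= count (dvdn (p ^ e)) ys) ->
  \prod_(x <- xs) x %| \prod_(y <- ys) y.
Proof.
move=> pos le_count; set B := \max_(x <- xs ++ ys) x.
have bnd x : x \in xs ++ ys -> 0 < x <= B by move=> x_in; rewrite pos // leq_bigmax_seq.
have prod_gt0 s : {subset s <= xs ++ ys} -> 0 < \prod_(x <- s) x.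
  by move=> sub; rewrite big_seq prodn_cond_gt0 // => x /sub /pos.
have subl : {subset xs <= xs ++ ys} by move=> x x_in; rewrite mem_cat x_in.
have subr : {subset ys <= xs ++ ys} by move=> x x_in; rewrite mem_cat x_in orbT.
apply/dvdn_partP => [|p]; first exact: prod_gt0.
rewrite mem_primes => /andP[p_pr _]; rewrite p_part pfactor_dvdn ?prod_gt0 //.
have layers s : {subset s <= xs ++ ys} ->
    logn p (\prod_(x <- s) x) = \sum_(1 <= e < B) count (dvdn (p ^ e)) s.
  by move=> sub; apply: logn_prod_count => // x /sub /bnd.
rewrite !layers //.
rewrite big_nat_cond [leqRHS]big_nat_cond; apply: leq_sum => e /andP[/andP[e_gt0 _] _].
exact: le_count.
Qed.

Lemma index_iota_cat m n p : m <= n -> n <= p ->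
  index_iota m n ++ index_iota n p = index_iota m p.
Proof.
move=> mn np; rewrite /index_iota -[in iota n _](subnKC mn) -iotaD; congr iota; lia.
Qed.

Lemma count_multiples r m : count (dvdn r) (index_iota 1 m.+1) = m %/ r.
Proof. by rewrite divn_count_dvd -sum1_count big_mkcond. Qed.

(* A window of k consecutive integers ending at n holds at least floor(k/r)
   multiples of r: floor(n/r) >= floor(k/r) + floor((n-k)/r). *)
Lemma count_multiples_window r k n : 0 < r -> k <= n ->
  k %/ r <= count (dvdn r) (index_iota (n - k).+1 n.+1).
Proof.
move=> r_gt0 kn.
have := count_multiples r n; rewrite -(index_iota_cat (ltn0Sn (n - k))) ?ltnS ?leq_subr //.
rewrite count_cat count_multiples -[in n %/ r](subnKC kn) divnD // => split_n.
by rewrite -(leq_add2l ((n - k) %/ r)) split_n addnC leq_addr.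
Qed.

Section MultipleClosedSets.
Variable Q : pred nat.
Hypothesis Q_gcd : forall j l, 0 < j -> 0 < l -> Q j -> Q l -> Q (gcdn j l).
Hypothesis Q_mul : forall j l, 0 < j -> 0 < l -> j %| l -> Q j -> Q l.

(* A nonempty such set consists of the multiples of its least element. *)
Lemma closed_set_multiples j0 : 0 < j0 -> Q j0 ->
  exists2 r, 0 < r & forall j, 0 < j -> Q j = (r %| j).
Proof.
move=> j0_gt0 Qj0; have exQ : exists j, (0 < j) && Q j by exists j0; rewrite j0_gt0.
case: (ex_minnP exQ) => r /andP[r_gt0 Qr] r_min; exists r => // j j_gt0.
apply/idP/idP => [Qj | /Q_mul]; last exact.
have g_gt0 : 0 < gcdn r j by rewrite gcdn_gt0 r_gt0.
have /r_min r_le : (0 < gcdn r j) && Q (gcdn r j) by rewrite g_gt0 Q_gcd.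
have g_le := dvdn_leq r_gt0 (dvdn_gcdl r j).
by apply/gcdn_idPl/eqP; rewrite eqn_leq g_le.
Qed.

Lemma count_window k n : k <= n ->
  count Q (index_iota 1 k.+1) <= count Q (index_iota (n - k).+1 n.+1).
Proof.
move=> kn; have [/hasP[j0 j0_in Qj0] | /hasPn noQ] := boolP (has Q (index_iota 1 k.+1)).
  have j0_gt0 : 0 < j0 by move: j0_in; rewrite mem_index_iota => /andP[].
  have [r r_gt0 Q_dvd] := closed_set_multiples j0_gt0 Qj0.
  have count_dvd lo hi : 0 < lo -> count Q (index_iota lo hi) = count (dvdn r) (index_iota lo hi).
    move=> lo_gt0; apply: eq_in_count => j; rewrite mem_index_iota => /andP[lo_j _].
    exact/Q_dvd/(leq_trans lo_gt0).
  by rewrite !count_dvd // count_multiples count_multiples_window.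
by rewrite (eq_in_count (a2 := pred0)) ?count_pred0 // => j /noQ /negbTE.
Qed.
End MultipleClosedSets.

Definition afactors (a : nat -> nat) (lo hi : nat) : seq nat := map a (index_iota lo hi).

Lemma abinom_factors a n k : abinom a n k =
  (\prod_(x <- afactors a (n - k).+1 n.+1) x) %/ \prod_(x <- afactors a 1 k.+1) x.
Proof. by rewrite /abinom /afactors !big_map. Qed.

Lemma dvdn_lcm_upto a j k : 0 < j <= k -> a j %| lcm_upto a k.
Proof.
by move=> jk; rewrite /lcm_upto (bigD1_seq j) ?mem_index_iota ?iota_uniq ?ltnS //= dvdn_lcml.
Qed.

Lemma lcm_upto_dvd a k m : (forall j, 0 < j <= k -> a j %| m) -> lcm_upto a k %| m.
Proof.
move=> a_dvd; rewrite /lcm_upto big_seq; elim/big_ind: _ => // [x y x_m y_m|j].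
  by rewrite dvdn_lcm x_m.
by rewrite mem_index_iota ltnS => /a_dvd.
Qed.

Section StrongDivisibility.
Variable a : nat -> nat.
Hypothesis a_sds : strong_div_seq a.

Lemma sds_gt0 j : 0 < j -> 0 < a j.
Proof. exact: (proj1 a_sds). Qed.

Lemma sds_dvd j l : 0 < j -> 0 < l -> j %| l -> a j %| a l.
Proof. by move=> j_gt0 l_gt0 /gcdn_idPl jl; rewrite -jl -(proj2 a_sds) ?dvdn_gcdr. Qed.

Lemma afactors_gt0 lo hi x : 0 < lo -> x \in afactors a lo hi -> 0 < x.
Proof.
move=> lo_gt0 /mapP[j]; rewrite mem_index_iota => /andP[lo_j _] ->.
exact/sds_gt0/(leq_trans lo_gt0).
Qed.

Lemma afactors_prod_gt0 lo hi : 0 < lo -> 0 < \prod_(x <- afactors a lo hi) x.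
Proof. by move=> lo_gt0; rewrite big_seq prodn_cond_gt0 // => x /(afactors_gt0 lo_gt0). Qed.

Lemma lcm_upto_gt0 k : 0 < lcm_upto a k.
Proof.
rewrite /lcm_upto big_seq; elim/big_ind: _ => // [x y|j]; first by rewrite lcmn_gt0 => -> ->.
by rewrite mem_index_iota => /andP[/sds_gt0].
Qed.

(* The indices j with q | a_j form a gcd- and multiple-closed set. *)
Lemma count_factors_window q k n : k <= n ->
  count (dvdn q) (afactors a 1 k.+1) <= count (dvdn q) (afactors a (n - k).+1 n.+1).
Proof.
rewrite !count_map; apply: count_window => /= [j l j_gt0 l_gt0 q_aj q_al | j l j_gt0 l_gt0 jl q_aj].
  by rewrite -(proj2 a_sds) // dvdn_gcd q_aj.
exact: dvdn_trans q_aj (sds_dvd j_gt0 l_gt0 jl).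
Qed.

(* Adding a_i (k < i <= n) on the left is paid for by L(k) on the right: if q
   divides some a_j with j <= k it divides L(k); otherwise the only factor left
   is a_i, which lies in the window since n - k <= k < i. *)
Lemma count_factors_window_lcm q k n i : n <= k.*2 -> k < i <= n ->
  count (dvdn q) (a i :: afactors a 1 k.+1) <=
  count (dvdn q) (lcm_upto a k :: afactors a (n - k).+1 n.+1).
Proof.
move=> n_2k /andP[ki i_n] /=.
have [/hasP[_ /mapP[j j_in ->] q_aj] | /hasPn no_q] := boolP (has (dvdn q) (afactors a 1 k.+1)).
  have q_lcm : q %| lcm_upto a k.
    by apply: dvdn_trans q_aj (dvdn_lcm_upto a _); move: j_in; rewrite mem_index_iota ltnS.
  by rewrite q_lcm leq_add ?leq_b1 ?count_factors_window ?(leq_trans (ltnW ki)).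
rewrite (eq_in_count (a2 := pred0)) ?count_pred0 ?addn0; last by move=> x /no_q /negbTE.
apply: leq_trans (leq_addl _ _); case q_ai : (q %| a i) => //; rewrite -has_count.
apply/hasP; exists (a i) => //; apply: map_f; rewrite mem_index_iota -addnn in n_2k *; lia.
Qed.

Lemma abinomK k n : k <= n ->
  abinom a n k * \prod_(x <- afactors a 1 k.+1) x = \prod_(x <- afactors a (n - k).+1 n.+1) x.
Proof.
move=> kn; rewrite abinom_factors divnK //; apply: dvdn_prod_count => [x|p e _ _].
  by rewrite mem_cat => /orP[] /afactors_gt0; apply.
exact: count_factors_window.
Qed.

Lemma dvdn_abinom_lcm k n i : n <= k.*2 -> k < i <= n ->
  a i %| abinom a n k * lcm_upto a k.
Proof.
move=> n_2k ikn; have [i_gt0 kn] : 0 < i /\ k <= n by case/andP: ikn; lia.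
have := @dvdn_prod_count (a i :: afactors a 1 k.+1) (lcm_upto a k :: afactors a (n - k).+1 n.+1).
rewrite !big_cons -(abinomK kn) mulnCA mulnA dvdn_pmul2r ?afactors_prod_gt0 //.
apply=> [x|p e _ _]; last exact: count_factors_window_lcm.
rewrite mem_cat !inE => /orP[/orP[/eqP-> | ] | /orP[/eqP-> | ]].
- exact: sds_gt0.
- exact: afactors_gt0 (ltn0Sn _).
- exact: lcm_upto_gt0.
- exact: afactors_gt0 (ltn0Sn _).
Qed.

Lemma lcm_dvd_abinom_lcm k n : n <= k.*2 -> lcm_upto a n %| abinom a n k * lcm_upto a k.
Proof.
move=> n_2k; apply: lcm_upto_dvd => i /andP[i_gt0 i_n].
have [i_k | k_i] := leqP i k; first by rewrite dvdn_mull // dvdn_lcm_upto ?i_gt0.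
by apply: dvdn_abinom_lcm; rewrite ?k_i.
Qed.

Lemma abinom_nn n : abinom a n n = 1.
Proof. by rewrite abinom_factors subnn divnn afactors_prod_gt0. Qed.
End StrongDivisibility.

Theorem corollary2 (a : nat -> nat) (Ha : strong_div_seq a) (n : nat) (Hn : 0 < n) :
  lcm_upto a n =
  \big[gcdn/0]_(0 <= k < n.+1 | n <= k.*2) (abinom a n k * lcm_upto a k).
Proof.
apply/eqP; rewrite eqn_dvd; apply/andP; split.
  rewrite big_seq_cond; elim/big_ind: _ => [|x y x_dvd y_dvd|k]; first exact: dvdn0.
    by rewrite dvdn_gcd x_dvd.
  by move=> /andP[_ n_2k]; apply: lcm_dvd_abinom_lcm.
(* the term k = n is abinom(n, n) L(n) = L(n) *)
rewrite big_mkcond big_nat_recr //= -addnn leq_addr (abinom_nn Ha) mul1n.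
exact: dvdn_gcdr.
Qed.
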